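(* Let $k\ge2$, $\Sigma_k=\{0,1,\dots,k-1\}$, and let $(f(n))_{n\ge0}$ be a $k$-regular sequence. Let $T=(Q,\Sigma_k,\Sigma_k,\delta,q_0,F,\rho)$ be a functional finite-state transducer with transitions on single letters only but arbitrary words as outputs on each transition, where $Q=\{q_0,\dots,q_{r-1}\}$, $\delta:Q\times\Sigma_k\to Q$ is the transition function, $\rho:Q\times\Sigma_k\to\Sigma_k^*$ is the output function, and $F\subseteq Q$ is the set of final states; $\delta$ and $\rho$ are extended to $\Sigma_k^*$ in the obvious way, and for an input word $x$ the output $T(x)=\rho(q_0,x)$ is defined when $\delta(q_0,x)\in F$. Define $g(n)=f(T((n)_k))$, where $(n)_k$ is the canonical base-$k$ representation of $n$ and $f$ applied to a word over $\Sigma_k$ means $f$ evaluated at the integer that word represents in base $k$ (most significant digit first), assuming $T((n)_k)$ is defined for every $n$. Then $(g(n))_{n\ge0}$ is also a $k$-regular sequence.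
   Context: A sequence $(a_n)_{n\ge0}$ is $k$-regular if there is a finite subset $S$ of its $k$-kernel $\{(a_{k^en+i})_{n\ge0}: e\ge0, 0\le i<k^e\}$ such that every element of the $k$-kernel is a linear combination of elements of $S$; equivalently, there exist a row vector $v$, a matrix-valued morphism $\mu$ on $\Sigma_k^*$ and a column vector $w$ with $a_n=v\mu((n)_k)w$ for all $n$ (a linear representation, also satisfying $a_n=v\mu(x)w$ for any base-$k$ representation $x$ of $n$ with leading zeros). A transducer is functional if every input yields at most one output. *)

From mathcomp Require Import all_boot all_order all_algebra.
Set Implicit Arguments. Unset Strict Implicit. Unset Printing Implicit Defensive.
Import GRing.Theory.
Local Open Scope ring_scope.

Definition k_regular (R : fieldType) (k : nat) (f : nat -> R) : Prop :=
  exists S : seq (nat * nat),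
    all (fun p => p.2 < k ^ p.1)%N S /\
    forall e i : nat, (i < k ^ e)%N ->
      exists c : nat -> R, forall n : nat,
        f (k ^ e * n + i)%N =
        \sum_(j < size S) c j * f (k ^ (nth (0, 0) S j).1 * n + (nth (0, 0) S j).2)%N.

(* least-significant-digit-first base-k digits of n (fuel-based; fuel n
   suffices for k >= 2); (0)_k is the empty word. *)
Fixpoint lsd_digits (k fuel n : nat) : seq nat :=
  match fuel with
  | 0 => [::]
  | fuel'.+1 => if n == 0%N then [::] else (n %% k)%N :: lsd_digits k fuel' (n %/ k)%N
  end.

Definition base_repr (k n : nat) : seq 'I_k :=
  pmap (fun d : nat => (insub d : option 'I_k)) (rev (lsd_digits k n n)).

Definition word_val (k : nat) (w : seq 'I_k) : nat :=
  foldl (fun acc (d : 'I_k) => acc * k + d)%N 0%N w.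

Definition ext_delta (Q : finType) (k : nat) (delta : Q -> 'I_k -> Q)
  (q : Q) (w : seq 'I_k) : Q := foldl delta q w.

Fixpoint ext_rho (Q : finType) (k : nat) (delta : Q -> 'I_k -> Q)
  (rho : Q -> 'I_k -> seq 'I_k) (q : Q) (w : seq 'I_k) : seq 'I_k :=
  match w with
  | [::] => [::]
  | a :: w' => rho q a ++ ext_rho delta rho (delta q a) w'
  end.

(* For n > 0 and i < k^e, the base-k expansion of k^e n + i is that of n
   followed by a word w depending only on (e, i).  Hence the output on it is
   T((n)_k) followed by y = rho(q, w), where q is the state reached on (n)_k,
   and g(k^e n + i) = f(k^|y| m + [y]_k) with m = [T((n)_k)]_k.  By
   k-regularity of f this is a fixed linear combination of the finitely many
   sequences n |-> [n > 0 and q is reached on (n)_k] f(k^e' m + i') for (e', i')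
   in a spanning set of the kernel of f, plus the indicator of n = 0.  So the
   k-kernel of g lies in a finite-dimensional space of sequences, and a
   maximal linearly independent family of kernel elements spans all of it. *)

From mathcomp Require Import all_boot all_order all_algebra.
From mathcomp Require Import zify.
From Stdlib Require Import Classical.
Set Implicit Arguments. Unset Strict Implicit. Unset Printing Implicit Defensive.
Import GRing.Theory.
Local Open Scope ring_scope.

Lemma big_option (R : Type) (idx : R) (op : Monoid.law idx) (T : finType)
    (F : option T -> R) :
  \big[op/idx]_(t : option T) F t = op (F None) (\big[op/idx]_(x : T) F (Some x)).
Proof.
by rewrite ![index_enum _]unlock [@Finite.enum in LHS]unlock /= big_cons big_map.
Qed.

Section Words.
Variable k : nat.

Lemma word_val_rcons (w : seq 'I_k) (a : 'I_k) :
  word_val (rcons w a) = (word_val w * k + a)%N.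
Proof. by rewrite /word_val -cats1 foldl_cat. Qed.

Lemma word_val_cat (x y : seq 'I_k) :
  word_val (x ++ y) = (k ^ size y * word_val x + word_val y)%N.
Proof.
elim/last_ind: y => [|y a IH]; first by rewrite cats0 mul1n addn0.
by rewrite -rcons_cat !word_val_rcons IH size_rcons expnSr; lia.
Qed.

Lemma word_val_lt (w : seq 'I_k) : (word_val w < k ^ size w)%N.
Proof.
elim/last_ind: w => [|w a IH] //.
rewrite word_val_rcons size_rcons expnSr; have := ltn_ord a; nia.
Qed.

Hypothesis k_gt1 : (1 < k)%N.

Lemma lsd_digits_fuel fuel1 fuel2 n : (n <= fuel1)%N -> (n <= fuel2)%N ->
  lsd_digits k fuel1 n = lsd_digits k fuel2 n.
Proof.
elim: fuel1 fuel2 n => [|fuel1 IH] [|fuel2] [|n] //= n_le1 n_le2.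
have : (n.+1 %/ k < n.+1)%N by apply: ltn_Pdiv; lia.
by move=> lt_div; congr (_ :: _); apply: IH; lia.
Qed.

Lemma base_repr_rcons m (a : 'I_k) : (0 < k * m + a)%N ->
  base_repr k (k * m + a) = rcons (base_repr k m) a.
Proof.
move=> n_gt0; rewrite /base_repr.
have a_lt := ltn_ord a.
have divE : ((k * m + a) %/ k = m)%N by rewrite mulnC divnMDl ?divn_small ?addn0 //; lia.
have modE : ((k * m + a) %% k = a)%N by rewrite mulnC modnMDl modn_small.
rewrite -[in lsd_digits _ _ _](prednK n_gt0) /= (prednK n_gt0).
rewrite divE modE (@lsd_digits_fuel _ m) ?leqnn //; last by nia.
by rewrite rev_cons -cats1 pmap_cat /= insubT /= cats1; congr rcons; apply: val_inj.
Qed.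

Lemma base_repr_shift e i : (i < k ^ e)%N -> exists w : seq 'I_k,
  forall n, (0 < n)%N -> base_repr k (k ^ e * n + i) = base_repr k n ++ w.
Proof.
elim: e i => [|e IH] i i_lt.
  exists [::] => n _; move: i_lt; rewrite expn0 ltnS leqn0 => /eqP->.
  by rewrite mul1n addn0 cats0.
have k_gt0 : (0 < k)%N by lia.
have [w shift_w] : exists w : seq 'I_k, forall n, (0 < n)%N ->
    base_repr k (k ^ e * n + i %/ k) = base_repr k n ++ w.
  by apply: IH; rewrite ltn_divLR // -expnSr.
exists (rcons w (Ordinal (ltn_pmod i k_gt0))) => n n_gt0.
have -> : (k ^ e.+1 * n + i = k * (k ^ e * n + i %/ k) + i %% k)%N.
  by rewrite {1}(divn_eq i k) expnS; set p := (k ^ e)%N; set q := (i %/ k)%N; nia.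
have ke_gt0 : (0 < k ^ e)%N by rewrite expn_gt0 k_gt0.
by rewrite (base_repr_rcons (a := Ordinal (ltn_pmod i k_gt0))) /= ?shift_w ?rcons_cat //; nia.
Qed.

End Words.

Lemma ext_rho_cat (Q : finType) k (delta : Q -> 'I_k -> Q) rho q x y :
  ext_rho delta rho q (x ++ y) =
  ext_rho delta rho q x ++ ext_rho delta rho (ext_delta delta q x) y.
Proof. by elim: x q => [|a x IH] q //=; rewrite IH catA. Qed.

Section FiniteSpanningSubfamily.
Variables (R : fieldType) (X J : Type) (j0 : J) (I : finType).
Variables (P : pred J) (K : J -> X -> R) (B : I -> X -> R).
Hypothesis K_in_span :
  forall j, P j -> exists c : I -> R, forall x, K j x = \sum_t c t * B t x.

Local Notation N := #|I|.

(* Sequences are handled through their coordinate rows in the basis B, so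
   that spans become row spaces of matrices. *)
Definition has_coords j (u : 'rV[R]_N) :=
  forall x, K j x = \sum_(t < N) u 0 t * B (enum_val t) x.

Lemma has_coords_exists j : P j -> exists u, has_coords j u.
Proof.
move=> /K_in_span[c Kj]; exists (\row_t c (enum_val t)) => x.
rewrite Kj; under [RHS]eq_bigr do rewrite mxE.
by rewrite -(big_enum_val (fun t => c t * B t x)).
Qed.

Let p0 : J * 'rV[R]_N := (j0, 0).

Definition span_rows (S : seq (J * 'rV[R]_N)) : 'M[R]_N :=
  foldr (fun p A => (p.2 + A)%MS) 0 S.

Definition coord_family S :=
  forall s, (s < size S)%N -> P (nth p0 S s).1 /\ has_coords (nth p0 S s).1 (nth p0 S s).2.

Lemma sub_span_rows_comb S u : (u <= span_rows S)%MS ->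
  exists c : nat -> R, u = \sum_(s < size S) c s *: (nth p0 S s).2.
Proof.
elim: S u => [|p S IH] u.
  by rewrite submx0 => /eqP->; exists (fun=> 0); rewrite big_ord0.
move=> /sub_addsmxP[[a b] /= ->].
have [c ->] := IH _ (submxMl b (span_rows S)).
exists (fun s => if s is s'.+1 then c s' else a 0 0).
by rewrite big_ord_recl /= {1}(mx11_scalar a) mul_scalar_mx.
Qed.

Lemma coord_family_cons j u S : P j -> has_coords j u -> coord_family S ->
  coord_family ((j, u) :: S).
Proof. by move=> Pj coords_u S_rows [|s] //= /S_rows. Qed.

Lemma span_rows_grow S : coord_family S ->
  (forall j u, P j -> has_coords j u -> (u <= span_rows S)%MS) \/
  exists2 S', coord_family S' & (\rank (span_rows S) < \rank (span_rows S'))%N.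
Proof.
move=> S_rows.
case: (classic (exists j u, [/\ P j, has_coords j u & ~~ (u <= span_rows S)%MS]))
  => [[j [u [Pj coords_u not_sub]]]|none]; [right | left].
  exists ((j, u) :: S); first exact: coord_family_cons.
  by apply: rank_ltmx; rewrite ltmxE addsmxSr addsmx_sub submx_refl andbT.
by move=> j u Pj coords_u; apply/negPn/negP => not_sub; apply: none; exists j, u.
Qed.

Lemma spanning_coord_family_exists :
  exists2 S, coord_family S &
    forall j u, P j -> has_coords j u -> (u <= span_rows S)%MS.
Proof.
suff grow b S : coord_family S -> (N - \rank (span_rows S) <= b)%N ->
    exists2 S', coord_family S' &
      forall j u, P j -> has_coords j u -> (u <= span_rows S')%MS.
  by apply: (grow N [::]) => //; rewrite leq_subr.
elim: b S => [|b IH] S S_rows rank_S;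
  case: (span_rows_grow S_rows) => [|[S' S'_rows rank_S']]; try by exists S.
  by have := rank_leq_col (span_rows S'); lia.
by apply: (IH S') => //; have := rank_leq_col (span_rows S'); lia.
Qed.

Theorem finite_spanning_subfamily : exists S : seq J, all P S /\
  forall j, P j -> exists c : nat -> R,
    forall x, K j x = \sum_(s < size S) c s * K (nth j0 S s) x.
Proof.
have [S S_rows S_spans] := spanning_coord_family_exists.
exists (map fst S); split.
  apply/(all_nthP j0) => s; rewrite size_map => s_lt.
  by rewrite (nth_map p0) //; case: (S_rows s s_lt).
move=> j Pj; have [u coords_u] := has_coords_exists Pj.
have [c u_def] := sub_span_rows_comb (S_spans j u Pj coords_u).
exists c => x; rewrite coords_u u_def size_map.
under eq_bigr => t _ do rewrite summxE big_distrl /=.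
rewrite exchange_big /=; apply: eq_bigr => s _.
have [_ coords_s] := S_rows s (ltn_ord s).
rewrite (nth_map p0) // coords_s big_distrr /=; apply: eq_bigr => t _.
by rewrite !mxE mulrA.
Qed.

End FiniteSpanningSubfamily.

Lemma k_regular_of_kernel_span (R : fieldType) k (g : nat -> R) (I : finType)
    (B : I -> nat -> R) :
  (forall e i, (i < k ^ e)%N ->
     exists c : I -> R, forall n, g (k ^ e * n + i)%N = \sum_t c t * B t n) ->
  k_regular k g.
Proof.
move=> kernel_span.
have [|S [S_valid S_spans]] := finite_spanning_subfamily (0, 0)%N
  (P := fun p : nat * nat => (p.2 < k ^ p.1)%N)
  (K := fun p n => g (k ^ p.1 * n + p.2)%N) (B := B).
  by case=> e i; apply: kernel_span.
by exists S; split => // e i /(S_spans (e, i)).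
Qed.

Section TransducedSequence.
Variables (R : fieldType) (k : nat) (f : nat -> R) (Sf : seq (nat * nat)).
Variables (Q : finType) (delta : Q -> 'I_k -> Q) (rho : Q -> 'I_k -> seq 'I_k).
Variable q0 : Q.
Hypothesis k_gt1 : (1 < k)%N.
Hypothesis f_kernel : forall e i, (i < k ^ e)%N -> exists c : nat -> R, forall m,
  f (k ^ e * m + i)%N =
  \sum_(l < size Sf) c l * f (k ^ (nth (0, 0) Sf l).1 * m + (nth (0, 0) Sf l).2)%N.

Local Notation state n := (ext_delta delta q0 (base_repr k n)).
Local Notation output n := (ext_rho delta rho q0 (base_repr k n)).
Local Notation f_kernel_at l m := (f (k ^ (nth (0, 0) Sf l).1 * m + (nth (0, 0) Sf l).2)%N).

Lemma output_shift e i : (i < k ^ e)%N -> exists w : seq 'I_k, forall n, (0 < n)%N ->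
  output (k ^ e * n + i) = output n ++ ext_rho delta rho (state n) w.
Proof.
by move=> /(base_repr_shift k_gt1)[w shift_w]; exists w => n /shift_w->; rewrite ext_rho_cat.
Qed.

Definition transduced_basis (t : option (Q * 'I_(size Sf))) (n : nat) : R :=
  if t is Some (q, l) then ((0 < n)%N && (state n == q))%:R * f_kernel_at l (word_val (output n))
  else (n == 0)%:R.

Lemma transduced_kernel_span e i : (i < k ^ e)%N ->
  exists c, forall n, f (word_val (output (k ^ e * n + i))) =
                      \sum_t c t * transduced_basis t n.
Proof.
move=> /output_shift[w shift_w].
have [c c_def] :=
  fin_all_exists (fun q => f_kernel (word_val_lt (ext_rho delta rho q w))).
exists (fun t : option (Q * 'I_(size Sf)) =>
  if t is Some (q, l) then c q l else f (word_val (output i))) => n.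
rewrite big_option /=; case: (posnP n) => [-> | n_gt0].
  by rewrite muln0 add0n mulr1 big1 ?addr0 // => -[q l] _; rewrite /= mulr0n mul0r mulr0.
rewrite mulr0n mulr0 add0r.
rewrite (_ : \sum_(p : Q * 'I_(size Sf)) _ =
             \sum_q \sum_(l < size Sf) c q l * transduced_basis (Some (q, l)) n); last first.
  by rewrite pair_bigA; apply: eq_bigr => -[q l] _; rewrite /transduced_basis n_gt0.
rewrite (bigD1 (state n)) //= [X in _ + X]big1 ?addr0; last first.
  move=> q /negbTE q_neq; apply: big1 => l _.
  by rewrite eq_sym q_neq andbF mul0r mulr0.
rewrite shift_w // word_val_cat c_def; apply: eq_bigr => l _.
by rewrite n_gt0 eqxx mul1r.
Qed.

End TransducedSequence.

Theorem lemma1 (R : fieldType) (k : nat) (hk : (2 <= k)%N) (f : nat -> R)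
  (hf : k_regular k f)
  (Q : finType) (delta : Q -> 'I_k -> Q) (rho : Q -> 'I_k -> seq 'I_k)
  (q0 : Q) (F : {set Q})
  (hdef : forall n : nat, ext_delta delta q0 (base_repr k n) \in F) :
  k_regular k (fun n : nat => f (word_val (ext_rho delta rho q0 (base_repr k n)))).
Proof.
have [Sf [_ f_kernel]] := hf.
apply: k_regular_of_kernel_span => e i.
exact: (transduced_kernel_span delta rho q0 hk f_kernel).
Qed.
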